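(* Let $n \geq 3$, let $\overline{g}$ be the standard metric on the unit sphere $S^n\subset\mathbb{R}^{n+1}$, $f = x_{n+1}|_{S^n}$, $S_+^n = \{f\ge 0\}$. For $\delta > 0$ let $\tilde g_\delta$ be a smooth Riemannian metric on $S_+^n$ with $\tilde g_\delta = \overline{g}$ on $\{f \leq \delta\}$ and $\tilde g_\delta = (1 - e^{-\frac{1}{f-\delta}})^{\frac{4}{n-2}}\,\overline{g}$ on $\{\delta < f < 3\delta\}$. If $\delta > 0$ is sufficiently small, then the scalar curvature of $\tilde g_\delta$ is strictly greater than $n(n-1)$ in the region $\{\delta < f < 3\delta\}$. *)

From HB Require Import structures.
From mathcomp Require Import all_boot all_order all_algebra.
From mathcomp Require Import all_classical all_reals all_analysis.
Set Implicit Arguments. Unset Strict Implicit. Unset Printing Implicit Defensive.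
Import Order.TTheory GRing.Theory Num.Theory.
Import numFieldNormedType.Exports.
Local Open Scope ring_scope.

(* Local coordinates: stereographic projection of S^n from the south pole
   -e_{n+1}.  A point y in R^n corresponds to
   x = (2y/(1+|y|^2), (1-|y|^2)/(1+|y|^2)) in S^n; this chart covers
   S^n minus the south pole, hence all of S^n_+ = {x_{n+1} >= 0}. *)

Section Defs.
Variables (R : realType) (n : nat).

Definition sqnorm (y : 'rV[R]_n) : R := \sum_(i < n) (y 0 i) ^+ 2.

Definition sph_f (y : 'rV[R]_n) : R := (1 - sqnorm y) / (1 + sqnorm y).

Definition round_metric (y : 'rV[R]_n) : 'M[R]_n :=
  (4 / (1 + sqnorm y) ^+ 2) *: 1%:M.

Definition conf_metric (delta : R) (y : 'rV[R]_n) : 'M[R]_n :=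
  ((1 - expR (- (1 / (sph_f y - delta)))) `^ (4 / (n - 2)%:R)) *: round_metric y.

Definition pd (i : 'I_n) (F : 'rV[R]_n -> R) (y : 'rV[R]_n) : R :=
  'D_(delta_mx 0 i) F y.

Definition christoffel (g : 'rV[R]_n -> 'M[R]_n) (k i j : 'I_n)
    (y : 'rV[R]_n) : R :=
  (1 / 2) * \sum_(l < n) (invmx (g y)) k l *
     (pd i (fun z => g z j l) y + pd j (fun z => g z i l) y
      - pd l (fun z => g z i j) y).

Definition ricci (g : 'rV[R]_n -> 'M[R]_n) (i j : 'I_n) (y : 'rV[R]_n) : R :=
  \sum_(k < n) (pd k (christoffel g k i j) y - pd j (christoffel g k i k) y)
  + \sum_(k < n) \sum_(l < n)
      (christoffel g k k l y * christoffel g l i j y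
       - christoffel g k j l y * christoffel g l i k y).

Definition scalar_curvature (g : 'rV[R]_n -> 'M[R]_n) (y : 'rV[R]_n) : R :=
  \sum_(i < n) \sum_(j < n) (invmx (g y)) i j * ricci g i j y.

End Defs.

(* In stereographic coordinates [y], with [s = |y|^2], the metric on the band is
   [phi(s) delta_ij] with [phi = u^p q], where [q = 4/(1+s)^2] is the round factor,
   [u = 1 - exp(-1/(f - delta))], [f = (1-s)/(1+s)] and [p = 4/(n-2)].  For any metric
   [phi(|y|^2) delta_ij], writing [A = phi'/phi], the scalar curvature is
   [phi^-1 ((2-2n)(2 s A' + n A) + (2-n)(n-1) s A^2)].  Substituting [A = p u'/u + q'/q],
   the terms in [(u'/u)^2] cancel because [p (n-2) = 4], which leaves
   [n(n-1) q + (n-1)(p/u) K], where [K] is a positive multiple of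
   [(1-f^2)(1-2(f-delta)) - n f (f-delta)^2].  This is positive when [delta < f < 3 delta]
   and [n delta < 1/10], and [phi = u^p q < q], so the curvature exceeds [n(n-1)]. *)

From HB Require Import structures.
From mathcomp Require Import all_boot all_order all_algebra.
From mathcomp Require Import all_classical all_reals all_analysis.
From mathcomp Require Import ring lra.
Import Order.TTheory GRing.Theory Num.Theory.
Import numFieldNormedType.Exports.
Local Open Scope classical_set_scope.
Local Open Scope ring_scope.
Set Implicit Arguments. Unset Strict Implicit. Unset Printing Implicit Defensive.

(* The rules of [derive.v] in pointwise form, so that derivatives of composite
   expressions can be matched against lambda-terms through [is_derive_eq]. *)
Section RealDerivatives.
Variable R : realType.
Implicit Types (f g : R -> R) (x a b : R).

Lemma is_derive1M x f g a b : is_derive x 1 f a -> is_derive x 1 g b ->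
  is_derive x 1 (fun y => f y * g y) (f x * b + g x * a).
Proof. by move=> ? ?; exact: (@is_deriveM _ _ f g). Qed.

Lemma is_derive1D x f g a b : is_derive x 1 f a -> is_derive x 1 g b ->
  is_derive x 1 (fun y => f y + g y) (a + b).
Proof. by move=> ? ?; exact: (@is_deriveD _ _ _ f g). Qed.

Lemma is_derive1B x f g a b : is_derive x 1 f a -> is_derive x 1 g b ->
  is_derive x 1 (fun y => f y - g y) (a - b).
Proof. by move=> ? ?; exact: (@is_deriveB _ _ _ f g). Qed.

Lemma is_derive1N x f a : is_derive x 1 f a -> is_derive x 1 (fun y => - f y) (- a).
Proof. by move=> ?; exact: (@is_deriveN _ _ _ f). Qed.

Lemma is_derive1V x f a : is_derive x 1 f a -> f x != 0 ->
  is_derive x 1 (fun y => (f y)^-1) (- a / f x ^+ 2).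
Proof.
move=> fa fx0; have := is_deriveV fx0 fa.
by rewrite /GRing.scale /= mulrC mulrN mulNr.
Qed.

Lemma is_derive1_sqr x f a : is_derive x 1 f a ->
  is_derive x 1 (fun y => f y ^+ 2) (2 * f x * a).
Proof.
move=> fa; have -> : (fun y => f y ^+ 2) = (fun y => f y * f y).
  by apply/funext => y; rewrite expr2.
by apply: (is_derive_eq (is_derive1M fa fa)); ring.
Qed.

Lemma is_derive1_comp_expR x f a : is_derive x 1 f a ->
  is_derive x 1 (fun y => expR (f y)) (expR (f x) * a).
Proof. exact: (is_derive1_comp (is_derive_expR _)). Qed.

Lemma is_derive1_comp_powR x f a (p : R) : is_derive x 1 f a -> 0 < f x ->
  is_derive x 1 (fun y => f y `^ p) (p * f x `^ (p - 1) * a).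
Proof. by move=> fa fx0; exact: (is_derive1_comp (is_derive1_powR p fx0) fa). Qed.

End RealDerivatives.

Section ConformalChristoffel.
Variables (R : realType) (n : nat).
Local Notation N := (n%:R : R).

Lemma sumr_kronecker (k : 'I_n) (F : 'I_n -> R) : \sum_(l < n) (k == l)%:R * F l = F k.
Proof.
rewrite (bigD1 k) //= eqxx mul1r big1 ?addr0 // => l /negbTE.
by rewrite eq_sym => ->; rewrite mul0r.
Qed.

Lemma sumr_const_ord (x : R) : \sum_(l < n) x = N * x.
Proof. by rewrite sumr_const card_ord mulr_natl. Qed.

(* Christoffel symbols [Gamma^k_ij] of the metric [exp(2u) delta] with [a = grad u]. *)
Definition conf_gamma (a : 'I_n -> R) (k i j : 'I_n) : R :=
  (j == k)%:R * a i + (i == k)%:R * a j - (i == j)%:R * a k.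

Section Contractions.
Variables (a : 'I_n -> R) (d : 'I_n -> 'I_n -> R).
Local Notation S := (\sum_(l < n) a l ^+ 2).

Lemma sum_conf_gamma_kii (i : 'I_n) :
  \sum_(k < n) conf_gamma (d k) k i i = 2 * d i i - \sum_(k < n) d k k.
Proof.
have -> : \sum_(k < n) conf_gamma (d k) k i i
          = \sum_(k < n) ((i == k)%:R * (2 * d k i) - d k k).
  by apply: eq_bigr => k _; rewrite /conf_gamma eqxx /=; ring.
by rewrite sumrB sumr_kronecker.
Qed.

Lemma sum_conf_gamma_kik (i : 'I_n) :
  \sum_(k < n) conf_gamma (d i) k i k = N * d i i.
Proof.
have -> : \sum_(k < n) conf_gamma (d i) k i k = \sum_(k < n) d i i.
  by apply: eq_bigr => k _; rewrite /conf_gamma eqxx /=; ring.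
exact: sumr_const_ord.
Qed.

Lemma conf_gamma_kkl (k l : 'I_n) : conf_gamma a k k l = a l.
Proof. by rewrite /conf_gamma eqxx [l == k]eq_sym /=; ring. Qed.

Lemma sum_grad_conf_gamma_lii (i : 'I_n) :
  \sum_(l < n) a l * conf_gamma a l i i = 2 * a i ^+ 2 - S.
Proof.
have -> : \sum_(l < n) a l * conf_gamma a l i i
          = \sum_(l < n) ((i == l)%:R * (2 * a l * a i) - a l ^+ 2).
  by apply: eq_bigr => l _; rewrite /conf_gamma eqxx /=; ring.
by rewrite sumrB sumr_kronecker; ring.
Qed.

Lemma sum_conf_gamma_kil_lik (i k : 'I_n) :
  \sum_(l < n) conf_gamma a k i l * conf_gamma a l i k =
  a i ^+ 2 - a k ^+ 2 + (i == k)%:R * (2 * a i * a k - S).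
Proof.
have -> : \sum_(l < n) conf_gamma a k i l * conf_gamma a l i k = \sum_(l < n)
  ((k == l)%:R * (a i * a i + (i == l)%:R * a i * a k - (i == k)%:R * a i * a l)
   + (i == k)%:R * ((k == l)%:R * (a l * a i) + (i == l)%:R * (a l * a k)
                    - (i == k)%:R * (a l * a l))
   - (i == l)%:R * (a k * ((k == l)%:R * a i + (i == l)%:R * a k
                           - (i == k)%:R * a l))).
  apply: eq_bigr => l _; rewrite /conf_gamma [l == k]eq_sym.
  by case: (k == l); case: (i == l); case: (i == k); rewrite /=; ring.
rewrite sumrB big_split /= !sumr_kronecker -mulr_sumr.
rewrite sumrB big_split /= !sumr_kronecker -mulr_sumr.
have -> : \sum_(l < n) a l * a l = S by apply: eq_bigr => l _; rewrite expr2.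
by rewrite eqxx [k == i]eq_sym; case: (i == k); rewrite /=; ring.
Qed.

(* With [d m i = d_m a_i], the summand is [R_ii] for [exp(2u) delta], so this is
   [exp(2u)] times its scalar curvature. *)
Lemma conf_ricci_trace :
  \sum_(i < n) (\sum_(k < n) (conf_gamma (d k) k i i - conf_gamma (d i) k i k)
     + \sum_(k < n) \sum_(l < n)
         (conf_gamma a k k l * conf_gamma a l i i - conf_gamma a k i l * conf_gamma a l i k))
  = (2 - 2 * N) * \sum_(i < n) d i i + (2 - N) * (N - 1) * S.
Proof.
have row i : \sum_(k < n) (conf_gamma (d k) k i i - conf_gamma (d i) k i k)
     + \sum_(k < n) \sum_(l < n)
         (conf_gamma a k k l * conf_gamma a l i i - conf_gamma a k i l * conf_gamma a l i k)
   = (2 - N) * d i i + (N - 2) * a i ^+ 2 - (\sum_(k < n) d k k + (N - 2) * S).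
  have quadratic : \sum_(k < n) \sum_(l < n)
      (conf_gamma a k k l * conf_gamma a l i i - conf_gamma a k i l * conf_gamma a l i k)
      = N * (2 * a i ^+ 2 - S) - (N * a i ^+ 2 - S + (2 * a i ^+ 2 - S)).
    under eq_bigr do rewrite sumrB.
    rewrite sumrB.
    under eq_bigr do (under eq_bigr do rewrite conf_gamma_kkl; rewrite sum_grad_conf_gamma_lii).
    under [X in _ - X]eq_bigr do rewrite sum_conf_gamma_kil_lik.
    rewrite sumr_const_ord big_split sumrB /= sumr_kronecker sumr_const_ord; ring.
  by rewrite sumrB sum_conf_gamma_kii sum_conf_gamma_kik quadratic; ring.
rewrite (eq_bigr _ (fun i _ => row i)) sumrB big_split /= -!mulr_sumr sumr_const_ord.
ring.
Qed.

End Contractions.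
End ConformalChristoffel.

Section CoordinateLines.
Variables (R : realType) (n : nat).
Local Notation e k := (delta_mx 0 k : 'rV[R]_n).

Lemma line_coord (k i : 'I_n) (h : R) (z : 'rV[R]_n) :
  (h *: e k + z) 0 i = z 0 i + h * (k == i)%:R.
Proof. by rewrite !mxE eqxx /= addrC eq_sym. Qed.

Lemma near_line (P : 'rV[R]_n -> Prop) (k : 'I_n) (z : 'rV[R]_n) :
  (\forall w \near z, P w) -> \forall h \near (0 : R), P (h *: e k + z).
Proof.
have line_cvg : (fun h : R => h *: e k + z) @ (0 : R) --> z.
  have := cvgD (cvgZ (@cvg_id _ (nbhs (0 : R))) (cvg_cst (e k))) (cvg_cst z).
  by rewrite scale0r add0r; apply.
exact: line_cvg.
Qed.

Lemma pd_line (k : 'I_n) (F : 'rV[R]_n -> R) (z : 'rV[R]_n) :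
  pd k F z = 'D_1 (fun h : R => F (h *: e k + z)) 0.
Proof.
rewrite /pd /derive scale0r add0r.
suff -> : (fun h : R => h^-1 *: ((F \o shift z) (h *: 'e_k) - F z)) =
  (fun h : R => h^-1 *: (((fun h0 : R => F (h0 *: 'e_k + z)) \o shift 0) h%:A - F z)) by [].
by apply/funext => h /=; rewrite /shift /= addr0 -[h%:A]/(h * 1) mulr1.
Qed.

Lemma near_eq_pd (k : 'I_n) (F G : 'rV[R]_n -> R) (z : 'rV[R]_n) :
  (\forall w \near z, F w = G w) -> pd k F z = pd k G z.
Proof. by move=> /(near_line k) FG; rewrite !pd_line; apply: near_eq_derive. Qed.

Lemma is_derive_line_pd (k : 'I_n) (F : 'rV[R]_n -> R) (z : 'rV[R]_n) (d : R) :
  is_derive (0 : R) 1 (fun h : R => F (h *: e k + z)) d -> pd k F z = d.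
Proof. by move=> Fd; rewrite pd_line; exact: derive_val. Qed.

Lemma sqnorm_ge0 (z : 'rV[R]_n) : 0 <= sqnorm z.
Proof. by apply: sumr_ge0 => i _; rewrite sqr_ge0. Qed.

Lemma sqnorm_line (k : 'I_n) (h : R) (z : 'rV[R]_n) :
  sqnorm (h *: e k + z) = sqnorm z + 2 * h * z 0 k + h ^+ 2.
Proof.
rewrite /sqnorm; under eq_bigr do rewrite line_coord sqrrD.
rewrite !big_split /= -!addrA; congr (_ + _).
have -> : \sum_(i < n) z 0 i * (h * (k == i)%:R) = \sum_(i < n) (k == i)%:R * (h * z 0 i).
  by apply: eq_bigr => i _; ring.
have -> : \sum_(i < n) (h * (k == i)%:R) ^+ 2 = \sum_(i < n) (k == i)%:R * h ^+ 2.
  apply: eq_bigr => i _; case: (k == i); rewrite /= ?mulr1 ?mulr0 ?mul1r ?mul0r //.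
  by rewrite expr0n.
by rewrite !sumr_kronecker; ring.
Qed.

Lemma is_derive_sqnorm_line (k : 'I_n) (z : 'rV[R]_n) :
  is_derive (0 : R) 1 (fun h : R => sqnorm (h *: e k + z)) (2 * z 0 k).
Proof.
have -> : (fun h : R => sqnorm (h *: e k + z)) =
          (fun h => sqnorm z + 2 * h * z 0 k + h ^+ 2).
  by apply/funext => h; rewrite sqnorm_line.
have sq' := is_derive1D (is_derive1D (is_derive_cst (sqnorm z) (0 : R) 1)
  (is_derive1M (is_derive1M (is_derive_cst (2 : R) (0 : R) 1) (is_derive_id (0 : R) 1))
               (is_derive_cst (z 0 k) (0 : R) 1)))
  (is_derive1_sqr (is_derive_id (0 : R) 1)).
by apply: (is_derive_eq sq'); rewrite /cst; ring.
Qed.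

Lemma sqnorm_continuous : continuous (@sqnorm R n).
Proof.
have -> : @sqnorm R n = \sum_(i < n) (fun w : 'rV[R]_n => w 0 i ^+ 2).
  by apply/funext => w; rewrite fct_sumE.
apply: (@big_ind ('rV[R]_n -> R) (fun f => continuous f)).
- exact: cst_continuous.
- by move=> f g cf cg w; exact: continuousD (cf w) (cg w).
- move=> i _ w.
  have -> : (fun v : 'rV[R]_n => v 0 i ^+ 2) = (fun v => v 0 i) \* (fun v => v 0 i).
    by apply/funext => v; rewrite /= expr2.
  by apply: continuousM; exact: coord_continuous.
Qed.

End CoordinateLines.

Section RadialConformalMetric.
Variables (R : realType) (n : nat) (phi A : R -> R) (g : 'rV[R]_n -> 'M[R]_n).
Local Notation e k := (delta_mx 0 k : 'rV[R]_n).
Local Notation N := (n%:R : R).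

Lemma scalar_mx_entry (a : R) (j l : 'I_n) : (a *: 1%:M : 'M[R]_n) j l = a * (j == l)%:R.
Proof. by rewrite !mxE; case: (j == l); rewrite ?mulr1n ?mulr0n. Qed.

Lemma sum_scalar_mx_mul (a : R) (i : 'I_n) (F : 'I_n -> R) :
  \sum_(j < n) (a *: 1%:M : 'M[R]_n) i j * F j = a * F i.
Proof.
rewrite -[in RHS](sumr_kronecker i F) mulr_sumr.
by apply: eq_bigr => j _; rewrite scalar_mx_entry; ring.
Qed.

Lemma invmx_scale1 (a : R) : invmx (a *: 1%:M : 'M[R]_n) = a^-1 *: 1%:M.
Proof. by rewrite !scalemx1 invmx_scalar. Qed.

(* [A] is the derivative of [log phi], so the metric is [exp(2u) delta] with
   [grad u = radial_grad]. *)
Definition radial_grad (w : 'rV[R]_n) (m : 'I_n) : R := A (sqnorm w) * w 0 m.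

Definition radial_hess (y : 'rV[R]_n) (dA : R) (m i : 'I_n) : R :=
  dA * (2 * y 0 m) * y 0 i + A (sqnorm y) * (m == i)%:R.

Section AtPoint.
Variable w : 'rV[R]_n.
Hypothesis g_near : \forall v \near w, g v = phi (sqnorm v) *: 1%:M.
Hypothesis phi_gt0 : 0 < phi (sqnorm w).
Hypothesis phi_deriv : is_derive (sqnorm w) 1 phi (phi (sqnorm w) * A (sqnorm w)).

Lemma pd_radial_entry (k j l : 'I_n) :
  pd k (fun v => g v j l) w = (j == l)%:R * (phi (sqnorm w) * A (sqnorm w) * (2 * w 0 k)).
Proof.
rewrite (@near_eq_pd _ _ k _ (fun v => phi (sqnorm v) * (j == l)%:R)); last first.
  by apply: filterS g_near => v ->; rewrite scalar_mx_entry.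
apply: is_derive_line_pd.
have phi_line : is_derive (sqnorm (0 *: e k + w)) 1 phi (phi (sqnorm w) * A (sqnorm w)).
  by rewrite scale0r add0r.
have entry' := is_derive1M (is_derive1_comp phi_line (is_derive_sqnorm_line k w))
                           (is_derive_cst ((j == l)%:R : R) (0 : R) 1).
by apply: (is_derive_eq entry'); rewrite /cst; ring.
Qed.

Lemma christoffel_radial (k i j : 'I_n) :
  christoffel g k i j w = conf_gamma (radial_grad w) k i j.
Proof.
rewrite /christoffel (nbhs_singleton g_near) invmx_scale1 sum_scalar_mx_mul.
rewrite !pd_radial_entry /conf_gamma /radial_grad.
by field; rewrite gt_eqF.
Qed.

End AtPoint.

Lemma is_derive_radial_grad (y : 'rV[R]_n) (dA : R) (m i : 'I_n) :
  is_derive (sqnorm y) 1 A dA ->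
  is_derive (0 : R) 1 (fun h : R => radial_grad (h *: e m + y) i) (radial_hess y dA m i).
Proof.
move=> A'; have -> : (fun h : R => radial_grad (h *: e m + y) i) =
    (fun h => A (sqnorm (h *: e m + y)) * (y 0 i + h * (m == i)%:R)).
  by apply/funext => h; rewrite /radial_grad line_coord.
have A_line : is_derive (sqnorm (0 *: e m + y)) 1 A dA by rewrite scale0r add0r.
have grad' := is_derive1M (is_derive1_comp A_line (is_derive_sqnorm_line m y))
  (is_derive1D (is_derive_cst (y 0 i) (0 : R) 1)
     (is_derive1M (is_derive_id (0 : R) 1) (is_derive_cst ((m == i)%:R : R) (0 : R) 1))).
by apply: (is_derive_eq grad'); rewrite /cst /= scale0r add0r /radial_hess; ring.
Qed.

Lemma pd_conf_gamma_radial (y : 'rV[R]_n) (dA : R) (m k i j : 'I_n) :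
  is_derive (sqnorm y) 1 A dA ->
  pd m (fun w => conf_gamma (radial_grad w) k i j) y = conf_gamma (radial_hess y dA m) k i j.
Proof.
move=> A'; apply: is_derive_line_pd.
have gamma' := is_derive1B
  (is_derive1D (is_derive1M (is_derive_cst ((j == k)%:R : R) (0 : R) 1)
                            (is_derive_radial_grad m i A'))
               (is_derive1M (is_derive_cst ((i == k)%:R : R) (0 : R) 1)
                            (is_derive_radial_grad m j A')))
  (is_derive1M (is_derive_cst ((i == j)%:R : R) (0 : R) 1) (is_derive_radial_grad m k A')).
by apply: (is_derive_eq gamma'); rewrite /cst /conf_gamma; ring.
Qed.

(* [phi] times the scalar curvature of [phi(|y|^2) delta], where [a = phi'/phi],
   [da = a'] and [s = |y|^2]. *)
Definition radial_scal_numer (N a da s : R) : R :=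
  (2 - 2 * N) * (2 * s * da + N * a) + (2 - N) * (N - 1) * a ^+ 2 * s.

Theorem scalar_curvature_radial (y : 'rV[R]_n) (dA : R) :
  (\forall w \near y, g w = phi (sqnorm w) *: 1%:M) ->
  (\forall w \near y, 0 < phi (sqnorm w) /\
                      is_derive (sqnorm w) 1 phi (phi (sqnorm w) * A (sqnorm w))) ->
  is_derive (sqnorm y) 1 A dA ->
  scalar_curvature g y = (phi (sqnorm y))^-1 * radial_scal_numer N (A (sqnorm y)) dA (sqnorm y).
Proof.
move=> g_near phi_near A'.
have chr_near : \forall w \near y,
    forall k i j, christoffel g k i j w = conf_gamma (radial_grad w) k i j.
  near=> w => k i j; have [phi_gt0 phi'] : 0 < phi (sqnorm w) /\
      is_derive (sqnorm w) 1 phi (phi (sqnorm w) * A (sqnorm w)) by near: w.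
  by apply: christoffel_radial => //; near: w; exact: near_join g_near.
have pd_chr m k i j : pd m (christoffel g k i j) y = conf_gamma (radial_hess y dA m) k i j.
  by rewrite -(pd_conf_gamma_radial _ _ _ _ A'); apply: near_eq_pd; apply: filterS chr_near.
have ricci_diag i : ricci g i i y =
    \sum_(k < n) (conf_gamma (radial_hess y dA k) k i i - conf_gamma (radial_hess y dA i) k i k)
  + \sum_(k < n) \sum_(l < n)
      (conf_gamma (radial_grad y) k k l * conf_gamma (radial_grad y) l i i
       - conf_gamma (radial_grad y) k i l * conf_gamma (radial_grad y) l i k).
  rewrite /ricci; congr (_ + _); first by apply: eq_bigr => k _; rewrite !pd_chr.
  by apply: eq_bigr => k _; apply: eq_bigr => l _; rewrite !(nbhs_singleton chr_near).
have hess_trace : \sum_(i < n) radial_hess y dA i i = 2 * sqnorm y * dA + N * A (sqnorm y).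
  have -> : 2 * sqnorm y * dA = \sum_(i < n) 2 * dA * y 0 i ^+ 2.
    by rewrite -mulr_sumr /sqnorm; ring.
  rewrite /radial_hess big_split /=; congr (_ + _).
    by apply: eq_bigr => i _; ring.
  by under eq_bigr do rewrite eqxx mulr1; rewrite sumr_const_ord.
have grad_sqr : \sum_(l < n) radial_grad y l ^+ 2 = A (sqnorm y) ^+ 2 * sqnorm y.
  by rewrite /sqnorm mulr_sumr; apply: eq_bigr => l _; rewrite /radial_grad; ring.
rewrite /scalar_curvature (nbhs_singleton g_near) invmx_scale1.
under eq_bigr do rewrite sum_scalar_mx_mul ricci_diag.
rewrite -mulr_sumr (conf_ricci_trace (radial_grad y) (radial_hess y dA)).
by rewrite hess_trace grad_sqr /radial_scal_numer; ring.
Unshelve. all: by end_near.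
Qed.

End RadialConformalMetric.

Lemma band_bracket_gt0 (R : realFieldType) (N c f : R) :
  0 < c -> c < f -> f < 3 * c -> 3 <= N -> N * c < 1 / 10 ->
  0 < (1 - f ^+ 2) * (1 - 2 * (f - c)) - N * f * (f - c) ^+ 2.
Proof.
move=> c_gt0 c_lt_f f_lt_3c N_ge3 Nc_small.
have f_small : f < 1 / 10 by nra.
have t_small : (f - c) ^+ 2 < 1 / 100 by nra.
have lead : 79 / 100 < (1 - f ^+ 2) * (1 - 2 * (f - c)) by nra.
have Nf_small : N * f < 3 / 10 by nra.
have : N * f * (f - c) ^+ 2 < 3 / 1000.
  have : 0 <= N * f by nra.
  nra.
lra.
Qed.

Section ConformalFactor.
Variables (R : realType) (c p : R).

(* [height (|y|^2)] is the coordinate [x_{n+1}] of the point with stereographic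
   coordinates [y]. *)
Definition height (s : R) : R := (1 - s) / (1 + s).
Definition height1 (s : R) : R := -2 / (1 + s) ^+ 2.
Definition height2 (s : R) : R := 4 / (1 + s) ^+ 3.

Definition gap (s : R) : R := height s - c.
Definition decay (s : R) : R := expR (- (1 / gap s)).
Definition cutoff (s : R) : R := 1 - decay s.
Definition cutoff1 (s : R) : R := - (decay s * height1 s / gap s ^+ 2).
Definition cutoff2 (s : R) : R :=
  - (decay s * (height1 s ^+ 2 / gap s ^+ 4 + height2 s / gap s ^+ 2
                - 2 * height1 s ^+ 2 / gap s ^+ 3)).

Definition round_factor (s : R) : R := 4 / (1 + s) ^+ 2.
Definition conf_factor (s : R) : R := cutoff s `^ p * round_factor s.
Definition conf_logder (s : R) : R := p * cutoff1 s / cutoff s - 2 / (1 + s).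
Definition conf_logder1 (s : R) : R :=
  p * (cutoff2 s * cutoff s - cutoff1 s ^+ 2) / cutoff s ^+ 2 + 2 / (1 + s) ^+ 2.

Lemma is_derive_one_plus (x : R) : is_derive x 1 (fun s : R => 1 + s) 1.
Proof.
have one_plus' := is_derive1D (is_derive_cst (1 : R) x 1) (is_derive_id x 1).
by apply: (is_derive_eq one_plus'); rewrite add0r.
Qed.

Section AtRadius.
Variable s : R.
Hypothesis s_ge0 : 0 <= s.
Hypothesis gap_gt0 : 0 < gap s.

Let one_plus_neq0 : 1 + s != 0. Proof. by rewrite gt_eqF // ltr_wpDr. Qed.
Let gap_neq0 : gap s != 0. Proof. by rewrite gt_eqF. Qed.

Lemma decay_gt0 : 0 < decay s. Proof. exact: expR_gt0. Qed.

Lemma cutoff_gt0 : 0 < cutoff s.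
Proof. by rewrite subr_gt0 /decay expR_lt1 oppr_lt0 mul1r invr_gt0. Qed.

Lemma cutoff_lt1 : cutoff s < 1.
Proof. by rewrite ltrBlDr ltrDl decay_gt0. Qed.

Let cutoff_neq0 : cutoff s != 0. Proof. by rewrite gt_eqF // cutoff_gt0. Qed.

Lemma round_factor_gt0 : 0 < round_factor s.
Proof. by rewrite divr_gt0 // exprn_gt0 // ltr_wpDr. Qed.

Lemma conf_factor_gt0 : 0 < conf_factor s.
Proof. by rewrite mulr_gt0 ?powR_gt0 ?cutoff_gt0 ?round_factor_gt0. Qed.

Lemma is_derive_height : is_derive s 1 height (height1 s).
Proof.
have h' := is_derive1M (is_derive1B (is_derive_cst (1 : R) s 1) (is_derive_id s 1))
                       (is_derive1V (is_derive_one_plus s) one_plus_neq0).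
by apply: (is_derive_eq h'); rewrite /cst /height1; field.
Qed.

Lemma is_derive_height1 : is_derive s 1 height1 (height2 s).
Proof.
have h1' := is_derive1M (is_derive_cst (-2 : R) s 1)
  (is_derive1V (is_derive1_sqr (is_derive_one_plus s)) (expf_neq0 2 one_plus_neq0)).
by apply: (is_derive_eq h1'); rewrite /cst /height2; field.
Qed.

Lemma is_derive_gap : is_derive s 1 gap (height1 s).
Proof.
have gap' := is_derive1B is_derive_height (is_derive_cst c s 1).
by apply: (is_derive_eq gap'); rewrite subr0.
Qed.

Lemma is_derive_decay : is_derive s 1 decay (decay s * height1 s / gap s ^+ 2).
Proof.
have decay' := is_derive1_comp_expR (is_derive1N (is_derive1M (is_derive_cst (1 : R) s 1)
                                 (is_derive1V is_derive_gap gap_neq0))).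
by apply: (is_derive_eq decay'); rewrite /cst /decay; field.
Qed.

Lemma is_derive_cutoff : is_derive s 1 cutoff (cutoff1 s).
Proof.
have cutoff' := is_derive1B (is_derive_cst (1 : R) s 1) is_derive_decay.
by apply: (is_derive_eq cutoff'); rewrite /cst /cutoff1 sub0r.
Qed.

Lemma is_derive_cutoff1 : is_derive s 1 cutoff1 (cutoff2 s).
Proof.
have cutoff1' := is_derive1N (is_derive1M (is_derive1M is_derive_decay is_derive_height1)
  (is_derive1V (is_derive1_sqr is_derive_gap) (expf_neq0 2 gap_neq0))).
by apply: (is_derive_eq cutoff1'); rewrite /cutoff2; field.
Qed.

Lemma is_derive_conf_factor : is_derive s 1 conf_factor (conf_factor s * conf_logder s).
Proof.
have phi' := is_derive1M (is_derive1_comp_powR p is_derive_cutoff cutoff_gt0)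
  (is_derive1M (is_derive_cst (4 : R) s 1)
     (is_derive1V (is_derive1_sqr (is_derive_one_plus s)) (expf_neq0 2 one_plus_neq0))).
apply: (is_derive_eq phi').
have -> : cutoff s `^ (p - 1) = cutoff s `^ p / cutoff s.
  by rewrite powRB ?cutoff_neq0 ?implybT // powRr1 // ltW // cutoff_gt0.
rewrite /cst /conf_factor /conf_logder /round_factor.
by field; rewrite one_plus_neq0 cutoff_neq0.
Qed.

Lemma is_derive_conf_logder : is_derive s 1 conf_logder (conf_logder1 s).
Proof.
have A' := is_derive1B
  (is_derive1M (is_derive1M (is_derive_cst p s 1) is_derive_cutoff1)
               (is_derive1V is_derive_cutoff cutoff_neq0))
  (is_derive1M (is_derive_cst (2 : R) s 1) (is_derive1V (is_derive_one_plus s) one_plus_neq0)).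
apply: (is_derive_eq A'); rewrite /cst /conf_logder1.
by field; rewrite one_plus_neq0 cutoff_neq0.
Qed.

Variable N : R.

Definition cutoff_term : R :=
  - 4 * s * cutoff2 s - 2 * N * cutoff1 s + 4 * (N - 2) * s * cutoff1 s / (1 + s).

Lemma radial_scal_numer_conf_factor :
  radial_scal_numer N (conf_logder s) (conf_logder1 s) s =
  N * (N - 1) * round_factor s + (N - 1) * (p / cutoff s) * cutoff_term
  + (N - 1) * s * p * (cutoff1 s / cutoff s) ^+ 2 * (4 - p * (N - 2)).
Proof.
rewrite /radial_scal_numer /cutoff_term /conf_logder /conf_logder1 /round_factor.
by field; rewrite one_plus_neq0 cutoff_neq0.
Qed.

Lemma cutoff_term_factor : cutoff_term = decay s * 4 / ((1 + s) ^+ 2 * gap s ^+ 4) *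
  ((1 - height s ^+ 2) * (1 - 2 * gap s) - N * height s * gap s ^+ 2).
Proof.
rewrite /cutoff_term /cutoff2 /cutoff1 /height2 /height1.
move: gap_neq0; rewrite /gap /height => gap_neq0'.
field; rewrite one_plus_neq0 /=.
have -> : 1 - s + - c * (1 + s) = ((1 - s) / (1 + s) - c) * (1 + s) by field.
by rewrite mulf_neq0.
Qed.

Lemma cutoff_term_gt0 : 0 < c -> c < height s -> height s < 3 * c -> 3 <= N ->
  N * c < 1 / 10 -> 0 < cutoff_term.
Proof.
move=> c_gt0 c_lt_height height_lt_3c N_ge3 Nc_small.
rewrite cutoff_term_factor mulr_gt0 ?band_bracket_gt0 //.
by rewrite divr_gt0 ?mulr_gt0 ?decay_gt0 // ?exprn_gt0 // ltr_wpDr.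
Qed.

(* [p (N - 2) = 4] kills the term in [(cutoff1 / cutoff)^2]; [cutoff^p < 1] does the rest. *)
Lemma conf_factor_lt_scal_numer : 0 < c -> c < height s -> height s < 3 * c -> 3 <= N ->
  N * c < 1 / 10 -> p * (N - 2) = 4 ->
  N * (N - 1) * conf_factor s < radial_scal_numer N (conf_logder s) (conf_logder1 s) s.
Proof.
move=> c_gt0 c_lt_height height_lt_3c N_ge3 Nc_small p_crit; have p_gt0 : 0 < p.
  have N2_gt0 : 0 < N - 2 by lra.
  by rewrite -(pmulr_lgt0 _ N2_gt0) p_crit.
rewrite radial_scal_numer_conf_factor p_crit subrr mulr0 addr0.
have cutoff_pow_lt1 : cutoff s `^ p < 1.
  have := @gt0_ltr_powR _ p p_gt0 (cutoff s) 1.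
  rewrite powR1; apply; rewrite ?nnegrE ?ler01 ?cutoff_lt1 //.
  by rewrite ltW // cutoff_gt0.
have term_gt0 := cutoff_term_gt0 c_gt0 c_lt_height height_lt_3c N_ge3 Nc_small.
have N1_gt0 : 0 < N - 1 by lra.
have cutoff_part : 0 < (N - 1) * (p / cutoff s) * cutoff_term.
  by rewrite !mulr_gt0 ?invr_gt0 ?cutoff_gt0.
have round_part : 0 < N * (N - 1) * round_factor s * (1 - cutoff s `^ p).
  have NN1_gt0 : 0 < N * (N - 1) by rewrite mulr_gt0 //; lra.
  by rewrite mulr_gt0 ?subr_gt0 // mulr_gt0 // round_factor_gt0.
rewrite /conf_factor; lra.
Qed.

End AtRadius.
End ConformalFactor.

Section StereographicBand.
Variables (R : realType) (n : nat).

Lemma sph_f_continuous (y : 'rV[R]_n) : {for y, continuous (@sph_f R n)}.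
Proof.
have [height_diff _] := is_derive_height (sqnorm_ge0 y).
rewrite (_ : @sph_f R n = @height R \o @sqnorm R n) //.
apply: continuous_comp; first exact: sqnorm_continuous.
exact/differentiable_continuous/derivable1_diffP.
Qed.

Lemma near_band (c : R) (y : 'rV[R]_n) : c < sph_f y -> sph_f y < 3 * c ->
  \forall w \near y, c < sph_f w /\ sph_f w < 3 * c.
Proof.
move=> y_low y_up; near=> w; split; near: w.
- exact: (cvgr_gt _ (sph_f_continuous (y := y)) _ y_low).
- exact: (cvgr_lt _ (sph_f_continuous (y := y)) _ y_up).
Unshelve. all: by end_near.
Qed.

Lemma conf_metricE (c : R) (y : 'rV[R]_n) :
  conf_metric c y = conf_factor c (4 / (n - 2)%:R) (sqnorm y) *: 1%:M.
Proof. by rewrite /conf_metric /round_metric scalerA. Qed.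

End StereographicBand.

Unset Implicit Arguments.

Theorem proposition4p2 (R : realType) (n : nat) (hn : (3 <= n)%N) :
  exists delta0 : R, 0 < delta0 /\
    forall delta : R, 0 < delta -> delta < delta0 ->
    forall gt : 'rV[R]_n -> 'M[R]_n,
      (forall y, 0 <= sph_f y -> sph_f y <= delta -> gt y = round_metric y) ->
      (forall y, delta < sph_f y -> sph_f y < 3 * delta ->
         gt y = conf_metric delta y) ->
      forall y : 'rV[R]_n, delta < sph_f y -> sph_f y < 3 * delta ->
        (n * (n - 1))%:R < scalar_curvature gt y.
Proof.
have N_ge3 : (3 : R) <= n%:R by rewrite (ler_nat R 3 n).
exists (10 * n%:R)^-1; split; first by rewrite invr_gt0; lra.
move=> delta delta_gt0 delta_lt gt _ gt_band y y_low y_up.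
pose p : R := 4 / (n - 2)%:R.
have band := near_band y_low y_up.
have gt_near : \forall w \near y, gt w = conf_factor delta p (sqnorm w) *: 1%:M.
  by apply: filterS band => w [w_low w_up]; rewrite gt_band // conf_metricE.
have phi_near : \forall w \near y, 0 < conf_factor delta p (sqnorm w) /\
    is_derive (sqnorm w) 1 (conf_factor delta p)
      (conf_factor delta p (sqnorm w) * conf_logder delta p (sqnorm w)).
  apply: filterS band => w [w_low _].
  have gap_gt0 : 0 < gap delta (sqnorm w) by rewrite subr_gt0.
  split; [exact: conf_factor_gt0 (sqnorm_ge0 w) gap_gt0 |
          exact: is_derive_conf_factor (sqnorm_ge0 w) gap_gt0].
have gap_gt0 : 0 < gap delta (sqnorm y) by rewrite subr_gt0.
rewrite (scalar_curvature_radial gt_near phi_near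
          (is_derive_conf_logder p (sqnorm_ge0 y) gap_gt0)).
have n_delta_small : n%:R * delta < 1 / 10.
  have n10_gt0 : (0 : R) < 10 * n%:R by lra.
  by move: delta_lt; rewrite -[X in _ < X]mulr1 ltr_pdivlMl // => ?; lra.
have p_crit : p * (n%:R - 2) = 4.
  rewrite /p natrB; last exact: leq_trans hn.
  by field; rewrite subr_eq0 gt_eqF // ltr_nat; exact: leq_trans hn.
rewrite ltr_pdivlMl ?conf_factor_gt0 ?sqnorm_ge0 // natrM natrB; last exact: leq_trans hn.
by rewrite mulrC; apply: (conf_factor_lt_scal_numer (sqnorm_ge0 y) gap_gt0).
Qed.
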